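(* Let $N\ge1$ and $p\in(0,1)$. Then $$\min_{M\in\{1,\dots,N\}}\ \min_{C_{N,M}\in\{0,1\}^{N\times M}}\bigl(M+B_{M,C_{N,M},p}\bigr)\ \ge\ N\bar A_p,$$ where $\bar A_p:=\min_{\vec m\in\{0,1,\dots,N\}^N}A_p(\vec m)$ and $$A_p(\vec m):=\sum_{i=1}^N\frac{m_i}{i}+q\,0^{m_1}\exp\Bigl(-\sum_{i=2}^N m_i a^i_p\Bigr),\qquad a^i_p:=\bigl|\log\bigl(1-(1-p)^{i-1}\bigr)\bigr|.$$
   Context: $q:=1-p$, $\log$ is the natural logarithm, and $0^0=1$ (so $0^{m_1}=1$ if $m_1=0$ and $0$ otherwise). For an $N\times M$ binary matrix $C_{N,M}=(c_{i,a})$, $d_a:=\sum_{l=1}^N c_{l,a}$ and $B_{M,C_{N,M},p}:=q\sum_{i=1}^N\prod_{a=1}^M(1-q^{d_a-1})^{c_{i,a}}$. *)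

From mathcomp Require Import all_boot all_order all_algebra.
From mathcomp Require Import all_classical all_reals all_analysis.
Set Implicit Arguments. Unset Strict Implicit. Unset Printing Implicit Defensive.
Import Order.TTheory GRing.Theory Num.Theory.
Local Open Scope ring_scope.

Section Defs.
Variable R : realType.

Definition qq (p : R) : R := 1 - p.

Definition dcol (N M : nat) (C : 'M[bool]_(N, M)) (a : 'I_M) : nat :=
  (\sum_(l < N) (C l a : nat))%N.

(* B_{M,C,p} := q * sum_i prod_a (1 - q^(d_a - 1))^(c_{i,a}).
   When c_{i,a} = 1 we have d_a >= 1, so the nat subtraction d_a - 1 is exact;
   when c_{i,a} = 0 the factor is (..)^0 = 1. *)
Definition Bval (N M : nat) (C : 'M[bool]_(N, M)) (p : R) : R :=
  qq p * \sum_(i < N) \prod_(a < M)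
    (1 - qq p ^+ (dcol C a - 1)) ^+ (C i a : nat).

Definition acoef (p : R) (i : nat) : R := `| ln (1 - qq p ^+ (i - 1)) |.

(* a vector m in {0,...,N}^N, 1-indexed: m_i = mval m i for 1 <= i <= N *)
Definition mval (N : nat) (m : N.-tuple 'I_N.+1) (i : nat) : nat :=
  nat_of_ord (nth ord0 m i.-1).

Definition Aval (N : nat) (p : R) (m : N.-tuple 'I_N.+1) : R :=
  \sum_(1 <= i < N.+1) (mval m i)%:R / i%:R
  + qq p * (0 : R) ^+ (mval m 1)
      * expR (- \sum_(2 <= i < N.+1) (mval m i)%:R * acoef p i).

Definition m_zero (N : nat) : N.-tuple 'I_N.+1 := [tuple of nseq N ord0].

(* bar A_p := min over m in {0,...,N}^N of A_p(m)  (a genuine minimum over a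
   nonempty finite set: the seed m_zero is itself one of the candidates). *)
Definition Abar (N : nat) (p : R) : R :=
  \big[Num.min/Aval p (m_zero N)]_(m : N.-tuple 'I_N.+1) Aval p m.

End Defs.

From mathcomp Require Import all_boot all_order all_algebra.
From mathcomp Require Import all_classical all_reals all_analysis.
Import Order.TTheory GRing.Theory Num.Theory.
Local Open Scope ring_scope.

(* Row i of C induces the vector m^(i) whose k-th entry counts the columns of
   degree k met by row i.  The harmonic part of A_p(m^(i)) is then
   sum_a c_{ia} / d_a, and since exp(-a^k_p) = 1 - q^(k-1) its exponential part
   is exactly the i-th summand of B: the factor 0^{m_1} vanishes precisely when
   row i meets a column of degree 1, whose factor 1 - q^0 in B is 0 as well.
   Summing over the rows, the harmonic parts add up to the number of nonempty
   columns, at most M, while each A_p(m^(i)) is at least bar A_p. *)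

Lemma sum_nat_pick (R : pzSemiRingType) (f : nat -> R) (d lo hi : nat) :
  (lo <= d < hi)%N -> \sum_(lo <= k < hi) (d == k)%:R * f k = f d.
Proof.
move=> Hd.
rewrite (bigD1_seq d) ?mem_index_iota ?iota_uniq //= eqxx mul1r big1 ?addr0 //.
by move=> k; rewrite eq_sym => /negbTE ->; rewrite mul0r.
Qed.

Lemma Abar_le_Aval (R : realType) (N : nat) (p : R) (m : N.-tuple 'I_N.+1) :
  Abar N p <= Aval p m.
Proof. exact: bigmin_le. Qed.

Lemma expR_Nacoef (R : realType) (p : R) (n : nat) :
  0 < p -> p < 1 -> (2 <= n)%N -> expR (- acoef p n) = 1 - qq p ^+ (n - 1).
Proof.
move=> p0 p1 n2.
have q0 : 0 < qq p by rewrite /qq subr_gt0.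
have q1 : qq p < 1 by rewrite /qq ltrBlDr ltrDl.
have x0 : 0 < 1 - qq p ^+ (n - 1).
  by rewrite subr_gt0 exprn_ilt1 ?ltW //; case: n n2 => // [[|n]].
have x1 : 1 - qq p ^+ (n - 1) < 1 by rewrite ltrBlDr ltrDl exprn_gt0.
by rewrite /acoef ltr0_norm ?ln_lt0 ?x0 ?x1 // opprK lnK.
Qed.

Set Implicit Arguments.

Section DegreeProfile.
Context {R : realType}.
Variables (N M : nat) (C : 'M[bool]_(N, M)).
Hypothesis leMN : (M <= N)%N.

Lemma dcol_gt0 i a : C i a -> (0 < dcol C a)%N.
Proof. by move=> Cia; rewrite /dcol (bigD1 i) //= Cia. Qed.

Lemma dcol_le a : (dcol C a <= N)%N.
Proof.
rewrite /dcol -[X in (_ <= X)%N]card_ord -sum1_card.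
by apply: leq_sum => l _; case: (C l a).
Qed.

Definition degree_count (i : 'I_N) (k : nat) : nat :=
  (\sum_(a < M) (C i a && (dcol C a == k) : nat))%N.

Lemma degree_count_le i k : (degree_count i k <= N)%N.
Proof.
apply: leq_trans leMN; rewrite /degree_count -[X in (_ <= X)%N]card_ord -sum1_card.
by apply: leq_sum => a _; case: (_ && _).
Qed.

Definition degree_profile (i : 'I_N) : N.-tuple 'I_N.+1 :=
  [tuple of mkseq (fun k => inord (degree_count i k.+1)) N].

Lemma mval_degree_profile i k :
  (0 < k <= N)%N -> mval (degree_profile i) k = degree_count i k.
Proof.
case/andP=> k0 kN; rewrite /mval /= nth_mkseq; last by case: k k0 kN.
by rewrite prednK // inordK // ltnS degree_count_le.
Qed.

Lemma sum_degree_count (i : 'I_N) (f : nat -> R) lo :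
  (forall a, C i a -> (lo <= dcol C a)%N) ->
  \sum_(lo <= k < N.+1) (degree_count i k)%:R * f k
  = \sum_(a < M) (C i a : nat)%:R * f (dcol C a).
Proof.
move=> lo_le.
under eq_bigr => k _ do rewrite /degree_count natr_sum mulr_suml.
rewrite exchange_big /=; apply: eq_bigr => a _.
case Cia: (C i a) => /=; last by rewrite mul0r big1 // => k _; rewrite mul0r.
by rewrite mul1r sum_nat_pick // lo_le //= ltnS dcol_le.
Qed.

Lemma degree_profile_harmonic i :
  \sum_(1 <= k < N.+1) (mval (degree_profile i) k)%:R / k%:R
  = \sum_(a < M) (C i a : nat)%:R / (dcol C a)%:R :> R.
Proof.
rewrite -(@sum_degree_count i (fun k => k%:R^-1) 1); last exact: (@dcol_gt0 i).
by apply: eq_big_nat => k k_range; rewrite mval_degree_profile.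
Qed.

Lemma degree_profile_penalty (p : R) i :
  0 < p -> p < 1 -> (0 < N)%N ->
  qq p * 0 ^+ mval (degree_profile i) 1
    * expR (- \sum_(2 <= k < N.+1) (mval (degree_profile i) k)%:R * acoef p k)
  = qq p * \prod_(a < M) (1 - qq p ^+ (dcol C a - 1)) ^+ (C i a : nat).
Proof.
move=> p0 p1 N0; rewrite -mulrA mval_degree_profile ?N0 // expr0n.
congr (_ * _).
have [[a /andP[Cia /eqP da1]] | no_deg1] :=
  pselect (exists a, C i a && (dcol C a == 1%N)).
  have -> : (degree_count i 1 == 0%N) = false.
    by apply/negbTE; rewrite -lt0n /degree_count (bigD1 a) //= Cia da1.
  by rewrite mul0r (bigD1 a) //= Cia da1 subnn expr0 subrr expr1 mul0r.
have deg_ge2 a : C i a -> (2 <= dcol C a)%N.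
  move=> Cia; rewrite ltn_neqAle eq_sym (@dcol_gt0 i a Cia) andbT.
  by apply/negP => da1; apply: no_deg1; exists a; rewrite Cia.
have -> : degree_count i 1 = 0%N.
  apply: big1 => a _; case Cia: (C i a) => //=.
  by rewrite gtn_eqF ?deg_ge2.
rewrite eqxx mul1r (@eq_big_nat _ _ _ 2 N.+1 _
  (fun k => (degree_count i k)%:R * acoef p k)); last first.
  by move=> k /andP[k2 kN]; rewrite mval_degree_profile // (leq_trans _ k2).
rewrite (@sum_degree_count i (acoef p) 2 deg_ge2) -sumrN expR_sum.
apply: eq_bigr => a _; case Cia: (C i a) => /=.
  by rewrite mul1r expr1 expR_Nacoef ?deg_ge2.
by rewrite mul0r oppr0 expR0 expr0.
Qed.

Lemma sum_column_shares_le :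
  \sum_(i < N) \sum_(a < M) (C i a : nat)%:R / (dcol C a)%:R <= M%:R :> R.
Proof.
rewrite exchange_big /= -[X in _ <= X%:R]card_ord -sumr_const.
apply: ler_sum => a _; rewrite -mulr_suml -natr_sum -/(dcol C a).
have [->|da0] := eqVneq (dcol C a) 0%N; first by rewrite mul0r ler01.
by rewrite divff // pnatr_eq0.
Qed.

End DegreeProfile.

Theorem lemma2 (R : realType) (N : nat) (p : R) :
  (1 <= N)%N -> 0 < p -> p < 1 ->
  forall (M : nat), (1 <= M)%N -> (M <= N)%N ->
  forall C : 'M[bool]_(N, M),
    N%:R * Abar N p <= M%:R + Bval C p.
Proof.
move=> N0 p0 p1 M _ leMN C.
have -> : N%:R * Abar N p = \sum_(i < N) Abar N p.
  by rewrite sumr_const card_ord mulr_natl.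
apply: (le_trans (y := \sum_(i < N) Aval p (degree_profile C i))).
  by apply: ler_sum => i _; exact: Abar_le_Aval.
under eq_bigr => i _ do
  rewrite /Aval (degree_profile_harmonic C leMN)
                (degree_profile_penalty C leMN p i p0 p1 N0).
rewrite big_split /= /Bval mulr_sumr lerD2r.
exact: sum_column_shares_le.
Qed.
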